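(* Let $f:[0,1]^n\to[0,1]$ be implementable by a Bernoulli factory, and suppose that for some open face $F_{A,S,B}$ of the hypercube we have $f|_{F_{A,S,B}}\not\equiv 1$. Then there exist an integer $m\ge 0$ and a constant $c>0$ such that $1-f(p)\ge c\left((1-p)^A\, p^S(1-p)^S\, p^B\right)^m$ for all $p\in[0,1]^n$.
   Context: A (multiparameter) Bernoulli factory with input $(p_1,\dots,p_n)$ is a (possibly infinite) rooted binary tree in which every node has either $2$ children or $0$ children (leaf). Each internal node is labelled either by an index $i\in[n]$ or by a constant $c\in(0,1)$; each leaf is labelled $0$ or $1$. To execute it with coins $p\in[0,1]^n$, start at the root; at a node labelled $i$ draw a fresh independent Bernoulli($p_i$) sample, at a node labelled $c$ a fresh independent Bernoulli($c$) sample; move to the child corresponding to the outcome; upon reaching a leaf output its label. $f$ is implementable by a Bernoulli factory if there is such a tree which, for every $p\in[0,1]^n$, reaches a leaf almost surely and outputs $1$ with probability exactly $f(p)$. For a partition $[n]=A\sqcup S\sqcup B$, the open face is $F_{A,S,B}=\{p\in[0,1]^n: p_i=0\ (i\in A),\ 0<p_i<1\ (i\in S),\ p_i=1\ (i\in B)\}$. For $T\subseteq[n]$, $p^T=\prod_{i\in T}p_i$, $(1-p)^T=\prod_{i\in T}(1-p_i)$. $f|_X\equiv 1$ means $f$ equals $1$ on all of $X$. *)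

From HB Require Import structures.
From mathcomp Require Import all_boot all_order all_algebra.
From mathcomp Require Import all_classical all_reals.
From mathcomp Require Import all_analysis.
Import numFieldNormedType.Exports.
Set Implicit Arguments. Unset Strict Implicit. Unset Printing Implicit Defensive.
Import Order.TTheory GRing.Theory Num.Theory.
Local Open Scope ring_scope.

Inductive bf_label (R : Type) (n : nat) :=
  | Coin of 'I_n
  | Const of R
  | Leaf of bool.

(* A (possibly infinite) rooted binary tree is given by the labelling of
   addresses: the node at address w : seq bool (sequence of outcomes taken
   from the root, true = outcome 1) has children w ++ [:: false] and
   w ++ [:: true].  Only addresses whose proper prefixes are all internal
   are actual nodes of the tree; labels elsewhere are irrelevant. *)
Definition bf_tree (R : Type) (n : nat) := seq bool -> bf_label R n.

Definition step (R : realType) n (p : 'I_n -> R) (l : bf_label R n) (b : bool) : R :=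
  match l with
  | Coin i => if b then p i else 1 - p i
  | Const c => if b then c else 1 - c
  | Leaf _ => 0
  end.

(* probability that the execution reaches address w (0 if w is not a node) *)
Definition reach (R : realType) n (t : bf_tree R n) (p : 'I_n -> R) (w : seq bool) : R :=
  \prod_(k < size w) step p (t (take k w)) (nth false w k).

Definition leaf_with (R : Type) n (b : bool) (l : bf_label R n) : bool :=
  if l is Leaf b' then b' == b else false.

Definition out_at (R : realType) n (t : bf_tree R n) (p : 'I_n -> R)
    (b : bool) (d : nat) : R :=
  \sum_(w : d.-tuple bool | leaf_with b (t w)) reach t p w.

Definition in_cube (R : realType) n (p : 'I_n -> R) : Prop :=
  forall i, 0 <= p i <= 1.

Definition implements (R : realType) n (t : bf_tree R n) (f : ('I_n -> R) -> R) : Prop :=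
  (forall w c, t w = Const _ c -> 0 < c < 1) /\
  forall p, in_cube p ->
    ((fun N => \sum_(d < N) (out_at t p false d + out_at t p true d)) @ \oo --> (1 : R))%classic
    /\ ((fun N => \sum_(d < N) out_at t p true d) @ \oo --> f p)%classic.

Definition implementable (R : realType) n (f : ('I_n -> R) -> R) : Prop :=
  exists t : bf_tree R n, implements t f.

Definition partition3 n (A S B : {set 'I_n}) : Prop :=
  [disjoint A & S] /\ [disjoint A & B] /\ [disjoint S & B] /\ A :|: S :|: B = [set: 'I_n]%SET.

Definition in_face (R : realType) n (A S B : {set 'I_n}) (p : 'I_n -> R) : Prop :=
  (forall i, i \in A -> p i = 0) /\ (forall i, i \in S -> 0 < p i < 1) /\
  (forall i, i \in B -> p i = 1).

From mathcomp Require Import all_boot all_order all_algebra.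
From mathcomp Require Import all_classical all_reals.
From mathcomp Require Import all_analysis.
From mathcomp Require Import lra.
Import numFieldNormedType.Exports.
Import Order.TTheory GRing.Theory Num.Theory.
Local Open Scope ring_scope.
Set Implicit Arguments. Unset Strict Implicit. Unset Printing Implicit Defensive.

(* Since f is not identically 1 on the face, at some point p0 of the face the
   tree reaches a leaf labelled 0 with positive probability, along a path w of
   length m.  Every toss on w has positive probability at p0, so along w a coin
   of A never lands 1 and a coin of B never lands 0.  Hence at any p of the cube
   each toss on w has probability at least the face weight Q(p) =
   (1-p)^A (p(1-p))^S p^B, up to a fixed factor at constant nodes, and w alone
   contributes at least c Q(p)^m to the probability 1 - f p of outputting 0. *)

Lemma prodr_le_factor (R : numDomainType) (I : finType) (P : pred I) (F : I -> R) i :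
  (forall j, P j -> 0 <= F j <= 1) -> P i -> \prod_(j | P j) F j <= F i.
Proof.
move=> F01 Pi; rewrite (bigD1 i) //= ler_piMr //; first by case/andP: (F01 i Pi).
by apply: prodr_ile1 => j /andP[Pj _]; apply: F01.
Qed.

Section FaceWeight.
Variables (R : realType) (n : nat) (A S B : {set 'I_n}).
Hypothesis cover : A :|: S :|: B = [set: 'I_n]%SET.

Lemma in_face_in_cube (p : 'I_n -> R) : in_face A S B p -> in_cube p.
Proof.
move=> [p_A [p_S p_B]] i; have : i \in [set: 'I_n]%SET by rewrite inE.
rewrite -cover !inE => /orP[/orP[/p_A->|/p_S/andP[? ?]]|/p_B->];
  by rewrite ?lexx ?ler01 ?ltW.
Qed.

Variables (p : 'I_n -> R).
Hypothesis p_cube : in_cube p.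

Definition face_weight : R :=
  (\prod_(i in A) (1 - p i)) * (\prod_(i in S) (p i * (1 - p i))) * (\prod_(i in B) p i).

Let compl01 i : 0 <= 1 - p i <= 1.
Proof. by case/andP: (p_cube i) => *; apply/andP; split; lra. Qed.

Let var01 i : 0 <= p i * (1 - p i) <= 1.
Proof. by case/andP: (p_cube i) => *; apply/andP; split; nra. Qed.

Let prodA01 : 0 <= \prod_(i in A) (1 - p i) <= 1.
Proof. by rewrite prodr_ge0 ?prodr_ile1 // => i _; case/andP: (compl01 i). Qed.

Let prodS01 : 0 <= \prod_(i in S) (p i * (1 - p i)) <= 1.
Proof. by rewrite prodr_ge0 ?prodr_ile1 // => i _; case/andP: (var01 i). Qed.

Let prodB01 : 0 <= \prod_(i in B) p i <= 1.
Proof. by rewrite prodr_ge0 ?prodr_ile1 // => i _; case/andP: (p_cube i). Qed.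

Lemma face_weight_ge0 : 0 <= face_weight.
Proof.
rewrite /face_weight.
by case/andP: prodA01; case/andP: prodS01; case/andP: prodB01 => *;
  rewrite !mulr_ge0.
Qed.

Lemma face_weight_le1 : face_weight <= 1.
Proof.
rewrite /face_weight; case/andP: prodA01; case/andP: prodS01; case/andP: prodB01 => *.
by rewrite !mulr_ile1 ?mulr_ge0.
Qed.

Lemma face_weight_le_prodA : face_weight <= \prod_(i in A) (1 - p i).
Proof.
rewrite /face_weight; case/andP: prodA01; case/andP: prodS01; case/andP: prodB01 => *.
by rewrite -mulrA; apply: ler_piMr; rewrite ?mulr_ile1.
Qed.

Lemma face_weight_le_prodS : face_weight <= \prod_(i in S) (p i * (1 - p i)).
Proof.
rewrite /face_weight; case/andP: prodA01; case/andP: prodS01; case/andP: prodB01 => *.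
apply: le_trans (ler_piMr _ _) (ler_piMl _ _) => //; exact: mulr_ge0.
Qed.

Lemma face_weight_le_prodB : face_weight <= \prod_(i in B) p i.
Proof.
rewrite /face_weight; case/andP: prodA01; case/andP: prodS01; case/andP: prodB01 => *.
by apply: ler_piMl; rewrite ?mulr_ile1.
Qed.

Lemma face_weight_le_p i : i \notin A -> face_weight <= p i.
Proof.
move=> iNA; have : i \in [set: 'I_n]%SET by rewrite inE.
rewrite -cover !inE (negbTE iNA) /= => /orP[iS | iB].
- apply: le_trans face_weight_le_prodS _.
  apply: le_trans (prodr_le_factor _ iS) _ => [j _|]; first exact: var01.
  by case/andP: (p_cube i) => *; nra.
- apply: le_trans face_weight_le_prodB _.
  exact: prodr_le_factor.
Qed.

Lemma face_weight_le_compl i : i \notin B -> face_weight <= 1 - p i.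
Proof.
move=> iNB; have : i \in [set: 'I_n]%SET by rewrite inE.
rewrite -cover !inE (negbTE iNB) orbF => /orP[iA | iS].
- apply: le_trans face_weight_le_prodA _.
  exact: (prodr_le_factor (F := fun j => 1 - p j)).
- apply: le_trans face_weight_le_prodS _.
  apply: le_trans (prodr_le_factor _ iS) _ => [j _|]; first exact: var01.
  by case/andP: (p_cube i) => *; nra.
Qed.

End FaceWeight.

Section Tree.
Variables (R : realType) (n : nat) (t : bf_tree R n).
Hypothesis const01 : forall w c, t w = Const _ c -> 0 < c < 1.

Lemma step_ge0 p w b : in_cube p -> 0 <= step p (t w) b.
Proof.
move=> p_cube; rewrite /step; case tw: (t w) => [i|c|l] //.
  by case/andP: (p_cube i) => *; case: b; rewrite ?subr_ge0.
by case/andP: (const01 tw) => *; case: b; rewrite ?subr_ge0 ltW.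
Qed.

Lemma reach_ge0 p w : in_cube p -> 0 <= reach t p w.
Proof. by move=> p_cube; apply: prodr_ge0 => k _; apply: step_ge0. Qed.

Lemma out_at_ge0 p b d : in_cube p -> 0 <= out_at t p b d.
Proof. by move=> p_cube; apply: sumr_ge0 => w _; apply: reach_ge0. Qed.

Lemma reach_le_out_at p b d (w : d.-tuple bool) :
  in_cube p -> leaf_with b (t w) -> reach t p w <= out_at t p b d.
Proof.
move=> p_cube leaf; rewrite /out_at (bigD1 w) //= lerDl.
by apply: sumr_ge0 => v _; apply: reach_ge0.
Qed.

Lemma out_at_neq0 p b d :
  out_at t p b d != 0 -> exists2 w : d.-tuple bool, leaf_with b (t w) & reach t p w != 0.
Proof.
apply: contra_neqP => no_leaf; apply: big1 => w leaf.
by apply/eqP; apply: contra_notT no_leaf => ne0; exists w.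
Qed.

Definition const_factor (l : bf_label R n) (b : bool) : R :=
  if l is Const c then (if b then c else 1 - c) else 1.

Definition path_const (w : seq bool) : R :=
  \prod_(k < size w) const_factor (t (take k w)) (nth false w k).

Lemma const_factor_gt0 w b : 0 < const_factor (t w) b.
Proof.
rewrite /const_factor; case tw: (t w) => // [c].
by case/andP: (const01 tw) => *; case: b; rewrite ?subr_gt0.
Qed.

Lemma path_const_gt0 w : 0 < path_const w.
Proof. by apply: prodr_gt0 => k _; apply: const_factor_gt0. Qed.

Variables (A S B : {set 'I_n}) (p0 p : 'I_n -> R).
Hypotheses (cover : A :|: S :|: B = [set: 'I_n]%SET) (p0_face : in_face A S B p0).
Hypothesis p_cube : in_cube p.

Lemma step_ge_face_weight w b : step p0 (t w) b != 0 ->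
  const_factor (t w) b * face_weight A S B p <= step p (t w) b.
Proof.
have [Q0 Q1] := (face_weight_ge0 A S B p_cube, face_weight_le1 A S B p_cube).
have [p0_A [_ p0_B]] := p0_face.
rewrite /step /const_factor; case tw: (t w) => [i|c|l] /=; last by rewrite eqxx.
- rewrite mul1r; case: b => step0.
  + by apply: face_weight_le_p => //; apply: contraNN step0 => /p0_A ->.
  + by apply: face_weight_le_compl => //; apply: contraNN step0 => /p0_B ->; rewrite subrr.
- by case/andP: (const01 tw) => c0 c1; case: b => _; nra.
Qed.

Lemma reach_ge_face_weight w : reach t p0 w != 0 ->
  path_const w * face_weight A S B p ^+ size w <= reach t p w.
Proof.
move=> reach0; rewrite -[size w]card_ord -prodr_const -big_split /=.
apply: ler_prod => k _; apply/andP; split.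
  by rewrite mulr_ge0 ?face_weight_ge0 ?ltW ?const_factor_gt0.
apply: step_ge_face_weight; apply: contraNneq reach0 => step0.
by rewrite /reach (bigD1 k) //= step0 mul0r.
Qed.

End Tree.

Section Implements.
Variables (R : realType) (n : nat) (t : bf_tree R n) (f : ('I_n -> R) -> R).
Hypothesis t_f : implements t f.

Lemma cvg_out_false p : in_cube p ->
  ((fun N => \sum_(d < N) out_at t p false d) @ \oo --> 1 - f p)%classic.
Proof.
move=> p_cube; have [halts outputs1] := t_f.2 p p_cube.
suff -> : (fun N => \sum_(d < N) out_at t p false d) = fun N =>
    \sum_(d < N) (out_at t p false d + out_at t p true d) - \sum_(d < N) out_at t p true d.
  exact: cvgB.
by apply/funext => N; rewrite big_split addrK.
Qed.

Lemma out_at_false_le p d : in_cube p -> out_at t p false d <= 1 - f p.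
Proof.
move=> p_cube; have sum_cvg := cvg_out_false p_cube.
rewrite -(cvg_lim (@Rhausdorff R) sum_cvg); apply: limr_ge; first exact: cvgP sum_cvg.
exists d.+1 => // N /= dN; rewrite (bigD1 (Ordinal dN)) //= lerDl.
by apply: sumr_ge0 => k _; apply: out_at_ge0 t_f.1 _ _ _ p_cube.
Qed.

Lemma out_at_false_neq0 p : in_cube p -> f p != 1 -> exists d, out_at t p false d != 0.
Proof.
move=> p_cube; apply: contra_neqP => all0.
have sums0 : (fun N => \sum_(d < N) out_at t p false d) = fun=> 0.
  by apply/funext => N; apply: big1 => d _; apply/eqP; apply: contra_notT all0; exists d.
have := cvg_out_false p_cube; rewrite sums0 => /(cvg_lim (@Rhausdorff R)).
by rewrite lim_cst // => /esym/eqP; rewrite subr_eq0 => /eqP.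
Qed.

End Implements.

Theorem lemma3 (R : realType) (n : nat) (f : ('I_n -> R) -> R)
    (A S B : {set 'I_n}) :
  implementable f -> partition3 A S B ->
  (exists p, in_face A S B p /\ f p <> 1) ->
  exists (m : nat) (c : R), 0 < c /\
    forall p, in_cube p ->
      c * ((\prod_(i in A) (1 - p i)) * (\prod_(i in S) (p i * (1 - p i)))
             * (\prod_(i in B) p i)) ^+ m <= 1 - f p.
Proof.
move=> [t t_f] [_ [_ [_ cover]]] [p0 [p0_face /eqP fp0]].
have p0_cube := in_face_in_cube cover p0_face.
have [d /out_at_neq0 [w leaf reach0]] := out_at_false_neq0 t_f p0_cube fp0.
exists (size w), (path_const t w); split; first exact: path_const_gt0 t_f.1 _.
move=> p p_cube.
apply: le_trans (reach_ge_face_weight t_f.1 cover p0_face p_cube reach0) _.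
apply: le_trans (reach_le_out_at t_f.1 p_cube leaf) _.
exact: (out_at_false_le t_f d p_cube).
Qed.
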